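(* Let $(\mathfrak{g},[\cdot,\ldots,\cdot],\varepsilon,\alpha)$ be an $n$-Hom-Lie color algebra. Then $\mathfrak{g}$ admits a product structure if and only if $\mathfrak{g}$ admits a decomposition $\mathfrak{g}=\mathfrak{g}_+\oplus\mathfrak{g}_-$ (so that $\mathfrak{g}_\gamma=(\mathfrak{g}_+\cap\mathfrak{g}_\gamma)\oplus(\mathfrak{g}_-\cap\mathfrak{g}_\gamma)$ for every $\gamma\in\Gamma$) into two nonzero $\Gamma$-graded subalgebras $\mathfrak{g}_+$ and $\mathfrak{g}_-$. Moreover, if $\mathcal{P}$ is a product structure, the eigenspaces $\mathfrak{g}_+=\{x:\mathcal{P}x=x\}$ and $\mathfrak{g}_-=\{x:\mathcal{P}x=-x\}$ give such a decomposition.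
   Context: $\mathbb{K}$ is a field of characteristic zero and $\Gamma$ an abelian group. A bicharacter is a map $\varepsilon:\Gamma\times\Gamma\to\mathbb{K}\setminus\{0\}$ with $\varepsilon(a,b)\varepsilon(b,a)=1$, $\varepsilon(a,b+c)=\varepsilon(a,b)\varepsilon(a,c)$, $\varepsilon(a+b,c)=\varepsilon(a,c)\varepsilon(b,c)$. For homogeneous $x,y$, $\varepsilon(x,y)=\varepsilon(|x|,|y|)$ and $\varepsilon(x,y_1+\dots+y_k)=\varepsilon(|x|,|y_1|+\dots+|y_k|)$ ($=1$ for an empty sum). An $n$-Hom-Lie color algebra $(\mathfrak{g},[\cdot,\ldots,\cdot],\varepsilon,\alpha)$ is a $\Gamma$-graded vector space with an $n$-linear bracket of degree zero, a bicharacter $\varepsilon$ and a degree-zero linear map $\alpha$ such that for homogeneous elements: (i) $[x_1,\ldots,x_i,x_{i+1},\ldots,x_n]=-\varepsilon(x_i,x_{i+1})[x_1,\ldots,x_{i+1},x_i,\ldots,x_n]$; (ii) $[\alpha(x_1),\ldots,\alpha(x_{n-1}),[y_1,\ldots,y_n]]=\sum_{i=1}^n\varepsilon(x_1+\dots+x_{n-1},y_1+\dots+y_{i-1})[\alpha(y_1),\ldots,\alpha(y_{i-1}),[x_1,\ldots,x_{n-1},y_i],\alpha(y_{i+1}),\ldots,\alpha(y_n)]$. A $\Gamma$-graded subalgebra is a graded subspace $\mathfrak{h}=\bigoplus_\gamma(\mathfrak{h}\cap\mathfrak{g}_\gamma)$ with $\alpha(\mathfrak{h})\subseteq\mathfrak{h}$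 and $[\mathfrak{h},\ldots,\mathfrak{h}]\subseteq\mathfrak{h}$. For a degree-zero linear $\mathcal{N}$ set $[\cdot]^0_{\mathcal{N}}=[\cdot]$ and $[x_1,\ldots,x_n]^j_{\mathcal{N}}=\sum_{i_1<\dots<i_j}[x_1,\ldots,\mathcal{N}x_{i_1},\ldots,\mathcal{N}x_{i_j},\ldots,x_n]-\mathcal{N}([x_1,\ldots,x_n]^{j-1}_{\mathcal{N}})$ for $1\le j\le n-1$ ($\mathcal{N}$ applied exactly at positions $i_1,\ldots,i_j$); $\mathcal{N}$ is a Nijenhuis operator if $\mathcal{N}\alpha=\alpha\mathcal{N}$ and $[\mathcal{N}x_1,\ldots,\mathcal{N}x_n]=\mathcal{N}([x_1,\ldots,x_n]^{n-1}_{\mathcal{N}})$. An almost product structure is a degree-zero linear map $\mathcal{P}:\mathfrak{g}\to\mathfrak{g}$ with $\mathcal{P}\neq\pm\mathrm{id}_{\mathfrak{g}}$ and $\mathcal{P}^2=\mathrm{id}_{\mathfrak{g}}$; a product structure is an almost product structure which is a Nijenhuis operator. *)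

From HB Require Import structures.
From mathcomp Require Import all_boot all_order.
From mathcomp Require Import fingroup perm.
From mathcomp Require Import all_algebra.
Set Implicit Arguments. Unset Strict Implicit. Unset Printing Implicit Defensive.
Import Order.TTheory GRing.Theory Num.Theory.
Local Open Scope ring_scope.

Section Defs.
Variables (K : fieldType) (V : lmodType K) (Gam : zmodType).

Definition upd n (x : 'I_n -> V) (k : nat) (v : V) : 'I_n -> V :=
  fun j => if val j == k then v else x j.

Definition subspace (h : pred V) : Prop :=
  0 \in h /\ forall (c : K) u v, u \in h -> v \in h -> c *: u + v \in h.

(* V = (+)_{gamma} G gamma as a Gamma-graded vector space *)
Definition graded_space (G : Gam -> pred V) : Prop :=
  (forall g, subspace (G g)) /\
  (forall x : V, exists s : seq Gam, exists f : Gam -> V,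
      uniq s /\ (forall g, f g \in G g) /\ x = \sum_(g <- s) f g) /\
  (forall (s : seq Gam) (f : Gam -> V), uniq s -> (forall g, f g \in G g) ->
      \sum_(g <- s) f g = 0 -> forall g, g \in s -> f g = 0).

Definition bicharacter (eps : Gam -> Gam -> K) : Prop :=
  (forall a b, eps a b != 0) /\
  (forall a b, eps a b * eps b a = 1) /\
  (forall a b c, eps a (b + c) = eps a b * eps a c) /\
  (forall a b c, eps (a + b) c = eps a c * eps b c).

Definition multilinear n (br : ('I_n -> V) -> V) : Prop :=
  forall (x : 'I_n -> V) (i : 'I_n) (c : K) (u v : V),
    br (upd x i (c *: u + v)) = c *: br (upd x i u) + br (upd x i v).

Definition degree_zero (G : Gam -> pred V) (f : V -> V) : Prop :=
  forall g x, x \in G g -> f x \in G g.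

Definition nHomLieColor (G : Gam -> pred V) n (br : ('I_n -> V) -> V)
    (eps : Gam -> Gam -> K) (alpha : {linear V -> V}) : Prop :=
  [/\ graded_space G /\ bicharacter eps, multilinear br,
      (
      (forall (x : 'I_n -> V) (a : 'I_n -> Gam), (forall j, x j \in G (a j)) ->
         br x \in G (\sum_(j < n) a j)) /\
      degree_zero G alpha) ,
      (forall (x : 'I_n -> V) (a : 'I_n -> Gam), (forall j, x j \in G (a j)) ->
         forall i j : 'I_n, val j = (val i).+1 ->
         br x = - (eps (a i) (a j) *: br (fun k => x (tperm i j k))))
    & (* (ii) Hom-Jacobi (x_1..x_{n-1} are x 0 .. x (n-2); x (n-1) is ignored) *)
      (forall (x y : 'I_n -> V) (a b : 'I_n -> Gam),
         (forall j, x j \in G (a j)) -> (forall j, y j \in G (b j)) ->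
         br (upd (fun j => alpha (x j)) n.-1 (br y)) =
         \sum_(i < n) eps (\sum_(j < n | (val j < n.-1)%N) a j)
                          (\sum_(j < n | (val j < val i)%N) b j) *:
            br (upd (fun j => alpha (y j)) i (br (upd x n.-1 (y i)))))].

Fixpoint nbr n (br : ('I_n -> V) -> V) (N : V -> V) (j : nat) (x : 'I_n -> V) : V :=
  match j with
  | 0 => br x
  | j'.+1 => \sum_(S : {set 'I_n} | #|S| == j'.+1)
                br (fun k => if k \in S then N (x k) else x k)
             - N (nbr br N j' x)
  end.

Definition Nijenhuis n (br : ('I_n -> V) -> V) (alpha N : {linear V -> V}) : Prop :=
  (forall v, N (alpha v) = alpha (N v)) /\
  (forall x : 'I_n -> V, br (fun k => N (x k)) = N (nbr br N n.-1 x)).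

Definition almost_product (G : Gam -> pred V) (P : {linear V -> V}) : Prop :=
  [/\ degree_zero G P, (exists v, P v != v), (exists v, P v != - v)
    & forall v, P (P v) = v].

Definition product_structure (G : Gam -> pred V) n (br : ('I_n -> V) -> V)
    (alpha P : {linear V -> V}) : Prop :=
  almost_product G P /\ Nijenhuis br alpha P.

Definition graded_subalgebra (G : Gam -> pred V) n (br : ('I_n -> V) -> V)
    (alpha : {linear V -> V}) (h : pred V) : Prop :=
  [/\ subspace h,
      (forall x, x \in h -> exists s : seq Gam, exists f : Gam -> V,
          [/\ uniq s, (forall g, f g \in G g /\ f g \in h) & x = \sum_(g <- s) f g]),
      (forall x, x \in h -> alpha x \in h)
    & (forall x : 'I_n -> V, (forall j, x j \in h) -> br x \in h)].

Definition subalg_decomposition (G : Gam -> pred V) n (br : ('I_n -> V) -> V)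
    (alpha : {linear V -> V}) (hp hm : pred V) : Prop :=
  [/\ graded_subalgebra G br alpha hp /\ graded_subalgebra G br alpha hm,
      (exists v, v \in hp /\ v != 0) /\ (exists v, v \in hm /\ v != 0),
      (forall v, v \in hp -> v \in hm -> v = 0),
      (forall x, exists u w, [/\ u \in hp, w \in hm & x = u + w])
    & (forall g x, x \in G g ->
         exists u w, [/\ u \in hp, u \in G g, w \in hm, w \in G g & x = u + w])].

Definition eigen_pos (P : V -> V) : pred V := fun x => P x == x.
Definition eigen_neg (P : V -> V) : pred V := fun x => P x == - x.

End Defs.

(* For an involution N write Y = [x_1 + N x_1, ..., x_n + N x_n] and
   Z = [x_1 - N x_1, ..., x_n - N x_n]. Expanding both by multilinearity into
   the layers T_i (the brackets with N applied in exactly i slots) and solving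
   the recursion defining [x]^j_N with N^2 = 1 gives
     2 [x]^n_N = (Y - N Y) + (-1)^n (Z + N Z),
   where [x]^n_N = [N x_1, ..., N x_n] - N [x]^(n-1)_N is the recursion run one
   step further, so it vanishes exactly when N is Nijenhuis.
   If N is a product structure and all x_i are fixed by N, then Z = 0 and
   Y = 2^n [x], so [x] is fixed by N; the (-1)-eigenspace is symmetric.
   Conversely, for g = g_+ (+) g_- the reflection N = id on g_+, -id on g_-
   sends Y into g_+ and Z into g_-, so the right-hand side vanishes. *)

From HB Require Import structures.
From mathcomp Require Import all_boot all_order.
From mathcomp Require Import fingroup perm.
From mathcomp Require Import all_algebra.
From Stdlib Require Import FunctionalExtensionality.
Import Order.TTheory GRing.Theory Num.Theory.
Local Open Scope ring_scope.
Set Implicit Arguments. Unset Strict Implicit. Unset Printing Implicit Defensive.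

Section Subspace.
Variables (K : fieldType) (V : lmodType K) (h : pred V).
Hypothesis h_sub : subspace h.

Lemma subspace0 : 0 \in h. Proof. by case: h_sub. Qed.

Lemma subspaceD u v : u \in h -> v \in h -> u + v \in h.
Proof. by move=> hu hv; have := h_sub.2 1 u v hu hv; rewrite scale1r. Qed.

Lemma subspaceZ c u : u \in h -> c *: u \in h.
Proof. by move=> hu; have := h_sub.2 c u 0 hu subspace0; rewrite addr0. Qed.

Lemma subspaceN u : u \in h -> - u \in h.
Proof. by move=> hu; rewrite -scaleN1r subspaceZ. Qed.

Lemma subspaceB u v : u \in h -> v \in h -> u - v \in h.
Proof. by move=> hu hv; rewrite subspaceD ?subspaceN. Qed.

End Subspace.

Lemma eq_oppr_self (K : fieldType) (V : lmodType K) (v : V) :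
  2 != 0 :> K -> (v == - v) = (v == 0).
Proof.
move=> two_neq0; rewrite -subr_eq0 opprK -mulr2n -scaler_nat.
by rewrite scaler_eq0 (negbTE two_neq0).
Qed.

Section Multilinear.
Variables (K : fieldType) (V : lmodType K) (n : nat) (br : ('I_n -> V) -> V).
Hypothesis br_ml : multilinear br.

Lemma updE (x : 'I_n -> V) (i : 'I_n) v :
  upd x i v = fun k => if k == i then v else x k.
Proof. by apply: functional_extensionality => k; rewrite /upd val_eqE. Qed.

Lemma upd_id (x : 'I_n -> V) (i : 'I_n) : upd x i (x i) = x.
Proof. by rewrite updE; apply: functional_extensionality => k; case: eqP => [->|]. Qed.

Lemma multilinear_eq0 (x : 'I_n -> V) (i : 'I_n) : x i = 0 -> br x = 0.
Proof.
move=> xi0; apply: (@addrI _ (br x)); rewrite addr0.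
have := br_ml x i 1 0 0; rewrite scale1r addr0 scale1r -xi0 upd_id.
by move=> /esym.
Qed.

Lemma multilinear_expand_set (c : K) (y z : 'I_n -> V) (A : {set 'I_n}) :
  br (fun k => if k \in A then y k + c *: z k else y k) =
  \sum_(S : {set 'I_n} | S \subset A)
     c ^+ #|S| *: br (fun k => if k \in S then z k else y k).
Proof.
move cardA: #|A| => m; elim: m A y cardA => [|m IH] A y cardA.
  have -> : A = set0 by apply/eqP; rewrite -cards_eq0 cardA.
  rewrite (big_pred1 set0) => [|S]; last by rewrite /= subset0.
  rewrite cards0 scale1r.
  by congr br; apply: functional_extensionality => k; rewrite in_set0.
have /set0Pn [a aA] : A != set0 by rewrite -cards_eq0 cardA.
set B := A :\ a.
have cardB : #|B| = m by move: cardA; rewrite (cardsD1 a) aA add1n => -[].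
have aNB : a \notin B by rewrite setD11.
set W := fun k => if k \in B then y k + c *: z k else y k.
have -> : (fun k => if k \in A then y k + c *: z k else y k) =
          upd W a (c *: z a + y a).
  rewrite updE; apply: functional_extensionality => k; rewrite /W in_setD1 addrC.
  by case: eqP => [->|_] /=; rewrite ?aA.
(* Linearity in slot a splits off the subsets avoiding a and those containing a. *)
rewrite br_ml.
have -> : upd W a (y a) = W by rewrite -{2}(upd_id W a) /W (negbTE aNB).
have -> : upd W a (z a) =
          fun k => if k \in B then upd y a (z a) k + c *: z k else upd y a (z a) k.
  rewrite !updE; apply: functional_extensionality => k.
  by case: eqP => [->|//]; rewrite (negbTE aNB).
rewrite !IH // scaler_sumr [RHS](bigID (fun S : {set _} => a \in S)) /=.
congr (_ + _); last by apply: eq_bigl => S; rewrite /B subsetD1.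
rewrite [RHS](reindex_onto (fun S => a |: S) (fun S => S :\ a)) /=; last first.
  by move=> S /andP[_ aS]; rewrite setD1K.
symmetry; apply: eq_big => S.
  rewrite setU11 andbT subUset sub1set aA /= /B subsetD1; congr andb.
  by apply/eqP/idP => [<-|aS]; [rewrite setD11 | rewrite setU1K].
move=> /andP[_ /eqP eS]; have aS : a \notin S by rewrite -eS setD11.
rewrite cardsU1 aS add1n exprS -scalerA; congr (_ *: (_ *: _)).
congr br; apply: functional_extensionality => k; rewrite in_setU1 updE.
by case: eqP => [->|_] /=; rewrite ?(negbTE aS).
Qed.

Lemma multilinear_expand (c : K) (y z : 'I_n -> V) :
  br (fun k => y k + c *: z k) =
  \sum_(S : {set 'I_n}) c ^+ #|S| *: br (fun k => if k \in S then z k else y k).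
Proof.
transitivity (br (fun k => if k \in [set: 'I_n] then y k + c *: z k else y k)).
  by congr br; apply: functional_extensionality => k; rewrite in_setT.
rewrite multilinear_expand_set; apply: eq_bigl => S; exact: subsetT.
Qed.

Lemma multilinear_homogeneous (c : K) (x : 'I_n -> V) :
  br (fun k => c *: x k) = c ^+ n *: br x.
Proof.
transitivity (br (fun k => 0 + c *: x k)).
  by congr br; apply: functional_extensionality => k; rewrite add0r.
rewrite multilinear_expand (bigD1 setT) //= big1 ?addr0 => [|S SnT].
  rewrite cardsT card_ord; congr (_ *: br _).
  by apply: functional_extensionality => k; rewrite in_setT.
have /subsetPn [k _ kNS] : ~~ ([set: 'I_n] \subset S) by rewrite subTset.
by rewrite (@multilinear_eq0 _ k) ?scaler0 //= (negbTE kNS).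
Qed.

Definition nbr_layer (N : V -> V) (x : 'I_n -> V) (i : nat) : V :=
  \sum_(S : {set 'I_n} | #|S| == i) br (fun k => if k \in S then N (x k) else x k).

Lemma multilinear_expand_layers (N : V -> V) (c : K) (x : 'I_n -> V) :
  br (fun k => x k + c *: N (x k)) = \sum_(i < n.+1) c ^+ i *: nbr_layer N x i.
Proof.
have cardS (S : {set 'I_n}) : (#|S| < n.+1)%N.
  by rewrite ltnS -[X in (_ <= X)%N](card_ord n) max_card.
rewrite multilinear_expand.
rewrite (partition_big (fun S : {set 'I_n} => inord #|S| : 'I_n.+1) xpredT) //=.
apply: eq_bigr => i _; rewrite scaler_sumr.
apply: eq_big => [S | S /eqP <-]; last by rewrite inordK.
by rewrite -val_eqE /= inordK.
Qed.

Lemma nbr_layer0 (N : V -> V) (x : 'I_n -> V) : nbr_layer N x 0 = br x.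
Proof.
rewrite /nbr_layer (big_pred1 set0) => [|S]; last by rewrite /= cards_eq0.
by congr br; apply: functional_extensionality => k; rewrite in_set0.
Qed.

Lemma nbr_layer_top (N : V -> V) (x : 'I_n -> V) :
  nbr_layer N x n = br (fun k => N (x k)).
Proof.
rewrite /nbr_layer (big_pred1 setT) => [|S]; last first.
  have := max_card S; rewrite card_ord => leSn.
  by rewrite /= eqEcard subsetT cardsT card_ord eqn_leq leSn.
by congr br; apply: functional_extensionality => k; rewrite in_setT.
Qed.

Lemma nbr_involutiveE (N : {linear V -> V}) (x : 'I_n -> V) j : involutive N ->
  nbr br N j x = \sum_(i < j.+1) (-1) ^+ (j - i) *:
                   (if odd (j - i) then N (nbr_layer N x i) else nbr_layer N x i).
Proof.
move=> NK; elim: j => [|j IH] /=.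
  by rewrite big_ord1 subnn expr0 scale1r nbr_layer0.
rewrite IH [RHS]big_ord_recr /= subnn expr0 scale1r addrC; congr (_ + _).
rewrite linear_sum -sumrN; apply: eq_bigr => i _.
have le_ij : (i <= j)%N by rewrite -ltnS.
rewrite subSn // linearZ /= exprS mulN1r scaleNr.
by case: (odd (j - i)) => /=; rewrite ?NK.
Qed.

Lemma nbr_torsion_identity (N : {linear V -> V}) (x : 'I_n -> V) : involutive N ->
  let Y := br (fun k => x k + N (x k)) in
  let Z := br (fun k => x k - N (x k)) in
  2 *: nbr br N n x = (Y - N Y) + (-1) ^+ n *: (Z + N Z).
Proof.
move=> NK Y Z.
have -> : Y = \sum_(i < n.+1) nbr_layer N x i.
  transitivity (br (fun k => x k + 1 *: N (x k))).
    by congr br; apply: functional_extensionality => k; rewrite scale1r.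
  by rewrite multilinear_expand_layers; under eq_bigr do rewrite expr1n scale1r.
have -> : Z = \sum_(i < n.+1) (-1) ^+ i *: nbr_layer N x i.
  rewrite -multilinear_expand_layers.
  by congr br; apply: functional_extensionality => k; rewrite scaleN1r.
rewrite nbr_involutiveE // !linear_sum -!big_split scaler_sumr -big_split /=.
apply: eq_bigr => i _; set t := nbr_layer N x i.
have -> : (-1) ^+ n = (-1) ^+ (n - i) * (-1) ^+ i :> K.
  by rewrite -exprD subnK // -ltnS.
rewrite [N (_ *: _)]linearZ /= -scalerDr !scalerA -mulrA -expr2 sqrr_sign mulr1.
rewrite -(signr_odd _ (n - i)); case: (odd (n - i)) => /=.
  by rewrite mulrN1 !scaleNr scale1r scaler_nat mulr2n !opprD addrACA subrr add0r.
by rewrite mulr1 scale1r scaler_nat mulr2n addrACA addNr addr0.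
Qed.

Lemma nbr_top (N : V -> V) (x : 'I_n -> V) : (0 < n)%N ->
  nbr br N n x = br (fun k => N (x k)) - N (nbr br N n.-1 x).
Proof.
move=> n_gt0.
have nbrS : nbr br N n.-1.+1 x = nbr_layer N x n.-1.+1 - N (nbr br N n.-1 x) by [].
by rewrite (prednK n_gt0) nbr_layer_top in nbrS.
Qed.

End Multilinear.

Section Involution.
Variables (K : fieldType) (V : lmodType K) (N : {linear V -> V}).

Lemma eigen_pos_subspace : subspace (eigen_pos N).
Proof.
split=> [|c u v /eqP Nu /eqP Nv]; first by rewrite /eigen_pos unfold_in /= linear0.
by rewrite unfold_in /= linearP Nu Nv.
Qed.

Lemma eigen_neg_subspace : subspace (eigen_neg N).
Proof.
split=> [|c u v /eqP Nu /eqP Nv]; first by rewrite unfold_in /= linear0 oppr0.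
by rewrite unfold_in /= linearP Nu Nv scalerN opprD.
Qed.

Definition eigen_pos_proj (v : V) : V := 2^-1 *: (v + N v).
Definition eigen_neg_proj (v : V) : V := 2^-1 *: (v - N v).

Fact eigen_pos_proj_is_linear : linear eigen_pos_proj.
Proof.
move=> a u v; rewrite /eigen_pos_proj linearP /= addrACA -scalerDr.
by rewrite [in RHS]scalerA [in RHS]mulrC -[in RHS]scalerA -[in RHS]scalerDr.
Qed.

Fact eigen_neg_proj_is_linear : linear eigen_neg_proj.
Proof.
move=> a u v; rewrite /eigen_neg_proj linearP /= opprD addrACA -scalerBr.
by rewrite [in RHS]scalerA [in RHS]mulrC -[in RHS]scalerA -[in RHS]scalerDr.
Qed.

HB.instance Definition _ :=
  GRing.isLinear.Build K V V *:%R eigen_pos_proj eigen_pos_proj_is_linear.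
HB.instance Definition _ :=
  GRing.isLinear.Build K V V *:%R eigen_neg_proj eigen_neg_proj_is_linear.

Hypotheses (NK : involutive N) (two_neq0 : 2 != 0 :> K).

Lemma half_addrr (v : V) : 2^-1 *: (v + v) = v.
Proof. by rewrite -mulr2n -scaler_nat scalerA mulVf // scale1r. Qed.

Lemma eigen_pos_projP v : eigen_pos_proj v \in eigen_pos N.
Proof. by rewrite unfold_in /= /eigen_pos_proj linearZ linearD /= NK addrC. Qed.

Lemma eigen_neg_projP v : eigen_neg_proj v \in eigen_neg N.
Proof.
by rewrite unfold_in /= /eigen_neg_proj linearZ linearB /= NK -scalerN opprB.
Qed.

Lemma eigen_proj_sum v : eigen_pos_proj v + eigen_neg_proj v = v.
Proof. by rewrite -scalerDr addrACA subrr addr0 half_addrr. Qed.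

Lemma eigen_pos_proj_id v : v \in eigen_pos N -> eigen_pos_proj v = v.
Proof. by move=> /eqP Nv; rewrite /eigen_pos_proj Nv half_addrr. Qed.

Lemma eigen_neg_proj_id v : v \in eigen_neg N -> eigen_neg_proj v = v.
Proof. by move=> /eqP Nv; rewrite /eigen_neg_proj Nv opprK half_addrr. Qed.

Lemma eigen_pos_neg_eq0 v : v \in eigen_pos N -> v \in eigen_neg N -> v = 0.
Proof.
move=> /eqP Nv vneg.
by rewrite -(eigen_neg_proj_id vneg) /eigen_neg_proj Nv subrr scaler0.
Qed.

End Involution.

Section TorsionFreeInvolution.
Variables (K : fieldType) (V : lmodType K) (n : nat) (br : ('I_n -> V) -> V).
Variable N : {linear V -> V}.
Hypotheses (br_ml : multilinear br) (NK : involutive N) (two_neq0 : 2 != 0 :> K).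
Hypotheses (n_gt0 : (0 < n)%N) (torsion0 : forall x, nbr br N n x = 0).

Let torsion_identity0 (x : 'I_n -> V) :
  let Y := br (fun k => x k + N (x k)) in
  let Z := br (fun k => x k - N (x k)) in
  (Y - N Y) + (-1) ^+ n *: (Z + N Z) = 0.
Proof. by move=> Y Z; rewrite /Y /Z -nbr_torsion_identity // torsion0 scaler0. Qed.

Let br_const0 : br (fun _ => 0) = 0.
Proof. exact: (multilinear_eq0 br_ml (i := Ordinal n_gt0)). Qed.

Lemma eigen_pos_br_closed (x : 'I_n -> V) :
  (forall k, x k \in eigen_pos N) -> br x \in eigen_pos N.
Proof.
move=> xpos; have := torsion_identity0 x => /=.
have -> : (fun k => x k + N (x k)) = (fun k => 2 *: x k).
  by apply: functional_extensionality => k; rewrite (eqP (xpos k)) scaler_nat mulr2n.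
have -> : (fun k => x k - N (x k)) = (fun _ => 0).
  by apply: functional_extensionality => k; rewrite (eqP (xpos k)) subrr.
rewrite multilinear_homogeneous // br_const0 linear0 addr0 scaler0 addr0.
rewrite linearZ /= -scalerBr => /eqP; rewrite scaler_eq0 expf_eq0 (negbTE two_neq0).
by rewrite andbF subr_eq0 eq_sym.
Qed.

Lemma eigen_neg_br_closed (x : 'I_n -> V) :
  (forall k, x k \in eigen_neg N) -> br x \in eigen_neg N.
Proof.
move=> xneg; have := torsion_identity0 x => /=.
have -> : (fun k => x k - N (x k)) = (fun k => 2 *: x k).
  apply: functional_extensionality => k.
  by rewrite (eqP (xneg k)) opprK scaler_nat mulr2n.
have -> : (fun k => x k + N (x k)) = (fun _ => 0).
  by apply: functional_extensionality => k; rewrite (eqP (xneg k)) subrr.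
rewrite multilinear_homogeneous // br_const0 linear0 subr0 add0r.
rewrite linearZ /= -scalerDr scalerA => /eqP; rewrite scaler_eq0 mulf_eq0 signr_eq0.
by rewrite expf_eq0 (negbTE two_neq0) andbF /= addrC addr_eq0.
Qed.

End TorsionFreeInvolution.

Lemma graded_subalgebra_proj (K : fieldType) (V : lmodType K) (Gam : zmodType)
    (G : Gam -> pred V) (n : nat) (br : ('I_n -> V) -> V)
    (alpha pr : {linear V -> V}) (h : pred V) :
  graded_space G -> subspace h -> (forall v, pr v \in h) ->
  (forall v, v \in h -> pr v = v) -> degree_zero G pr ->
  (forall x, x \in h -> alpha x \in h) ->
  (forall x : 'I_n -> V, (forall j, x j \in h) -> br x \in h) ->
  graded_subalgebra G br alpha h.
Proof.
move=> [_ [Gdec _]] hsub prh prid prG halpha hbr; split=> // x xh.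
have [s [f [s_uniq [fG xE]]]] := Gdec x.
exists s, (fun g => pr (f g)); split=> //.
  by move=> g; split; [exact: prG | exact: prh].
by rewrite -linear_sum -xE prid.
Qed.

Lemma product_structure_subalg_decomposition (K : fieldType) (V : lmodType K)
    (Gam : zmodType) (G : Gam -> pred V) (n : nat) (br : ('I_n -> V) -> V)
    (alpha P : {linear V -> V}) :
  2 != 0 :> K -> (0 < n)%N -> graded_space G -> multilinear br ->
  product_structure G br alpha P ->
  subalg_decomposition G br alpha (eigen_pos P) (eigen_neg P).
Proof.
move=> two_neq0 n_gt0 GS br_ml [[Pdeg [v1 Pv1] [v2 Pv2] PK] [Palpha PNij]].
have torsion0 x : nbr br P n x = 0 by rewrite nbr_top // PNij subrr.
have posG : degree_zero G (eigen_pos_proj P).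
  move=> g v vg; apply: (subspaceZ (GS.1 g)).
  exact: (subspaceD (GS.1 g) vg (Pdeg _ _ vg)).
have negG : degree_zero G (eigen_neg_proj P).
  move=> g v vg; apply: (subspaceZ (GS.1 g)).
  exact: (subspaceB (GS.1 g) vg (Pdeg _ _ vg)).
have Ppos v : v \in eigen_pos P -> P v = v by move/eqP.
have Pneg v : v \in eigen_neg P -> P v = - v by move/eqP.
split.
- split.
  + apply: (graded_subalgebra_proj (pr := eigen_pos_proj P)) => //.
    * exact: eigen_pos_subspace.
    * exact: eigen_pos_projP.
    * exact: eigen_pos_proj_id.
    * by move=> x /Ppos Px; rewrite unfold_in /= Palpha Px.
    * exact: eigen_pos_br_closed.
  + apply: (graded_subalgebra_proj (pr := eigen_neg_proj P)) => //.
    * exact: eigen_neg_subspace.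
    * exact: eigen_neg_projP.
    * exact: eigen_neg_proj_id.
    * by move=> x /Pneg Px; rewrite unfold_in /= Palpha Px linearN.
    * exact: eigen_neg_br_closed.
- split.
  + exists (eigen_pos_proj P v2); split; first exact: eigen_pos_projP.
    by rewrite scaler_eq0 invr_eq0 (negbTE two_neq0) addrC addr_eq0.
  + exists (eigen_neg_proj P v1); split; first exact: eigen_neg_projP.
    by rewrite scaler_eq0 invr_eq0 (negbTE two_neq0) subr_eq0 eq_sym.
- exact: eigen_pos_neg_eq0.
- move=> x; exists (eigen_pos_proj P x), (eigen_neg_proj P x).
  by split; rewrite ?eigen_pos_projP ?eigen_neg_projP ?eigen_proj_sum.
- move=> g x xg; exists (eigen_pos_proj P x), (eigen_neg_proj P x).
  by split; rewrite ?eigen_pos_projP ?eigen_neg_projP ?eigen_proj_sum ?posG ?negG.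
Qed.

Section Reflection.
Variables (K : fieldType) (V : lmodType K) (hp hm : pred V).
Hypotheses (sp : subspace hp) (sm : subspace hm).
Hypothesis hpm0 : forall v, v \in hp -> v \in hm -> v = 0.
Hypothesis hpm_span : forall x, exists u w, [/\ u \in hp, w \in hm & x = u + w].

Lemma pos_component_exists x : exists u, (u \in hp) && (x - u \in hm).
Proof.
have [u [w [up wm ->]]] := hpm_span x.
by exists u; rewrite up (addrC u w) addrK.
Qed.

Definition pos_component (x : V) : V := xchoose (pos_component_exists x).

Lemma pos_componentP x : (pos_component x \in hp) && (x - pos_component x \in hm).
Proof. exact: (xchooseP (pos_component_exists x)). Qed.

Lemma pos_component_uniq x u : u \in hp -> x - u \in hm -> pos_component x = u.
Proof.
move=> up xum; have /andP[pxp xpm] := pos_componentP x.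
apply/eqP; rewrite -subr_eq0; apply/eqP; apply: hpm0.
  exact: (subspaceB sp pxp up).
have -> : pos_component x - u = (x - u) - (x - pos_component x).
  by rewrite opprB [RHS]addrC addrA subrK.
exact: (subspaceB sm xum xpm).
Qed.

Definition reflection (x : V) : V := 2 *: pos_component x - x.

Fact reflection_is_linear : linear reflection.
Proof.
move=> a u v; have /andP[pup upm] := pos_componentP u.
have /andP[pvp vpm] := pos_componentP v.
rewrite /reflection (@pos_component_uniq _ (a *: pos_component u + pos_component v)).
- by rewrite scalerDr scalerA mulrC -scalerA opprD addrACA -scalerBr.
- by apply: (subspaceD sp) => //; apply: (subspaceZ sp).
- rewrite opprD addrACA -scalerBr.
  by apply: (subspaceD sm) => //; apply: (subspaceZ sm).
Qed.

(* Not a canonical instance: linearity depends on the section hypotheses. *)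
Definition reflection_linear : {linear V -> V} :=
  HB.pack reflection (GRing.isLinear.Build K V V *:%R reflection reflection_is_linear).

Lemma reflectionD u w : u \in hp -> w \in hm -> reflection (u + w) = u - w.
Proof.
move=> up wm; have uwu : u + w - u = w by rewrite (addrC u w) addrK.
rewrite /reflection (@pos_component_uniq _ u) ?uwu //.
by rewrite scaler_nat mulr2n opprD addrA addrK.
Qed.

Lemma reflection_pos u : u \in hp -> reflection u = u.
Proof. by move=> up; have := reflectionD up (subspace0 sm); rewrite addr0 subr0. Qed.

Lemma reflection_neg w : w \in hm -> reflection w = - w.
Proof. by move=> wm; have := reflectionD (subspace0 sp) wm; rewrite add0r sub0r. Qed.

Lemma reflection_involutive : involutive reflection.
Proof.
move=> x; have /andP[pxp xpm] := pos_componentP x.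
set p := pos_component x in pxp xpm *.
have xE : x = p + (x - p) by rewrite addrC subrK.
rewrite {1}xE reflectionD // reflectionD ?(subspaceN sm) //.
by rewrite opprK -xE.
Qed.

Lemma reflection_addr_pos x : x + reflection x \in hp.
Proof.
have /andP[pxp _] := pos_componentP x.
by rewrite /reflection addrC subrK; apply: subspaceZ.
Qed.

Lemma reflection_subr_neg x : x - reflection x \in hm.
Proof.
have /andP[_ xpm] := pos_componentP x.
have -> : x - reflection x = 2 *: (x - pos_component x).
  by rewrite /reflection opprB addrA scalerBr [2 *: x]scaler_nat mulr2n.
exact: (subspaceZ sm).
Qed.

End Reflection.

Lemma subalg_decomposition_product_structure (K : fieldType) (V : lmodType K)
    (Gam : zmodType) (G : Gam -> pred V) (n : nat) (br : ('I_n -> V) -> V)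
    (alpha : {linear V -> V}) (hp hm : pred V) :
  2 != 0 :> K -> (0 < n)%N -> graded_space G -> multilinear br ->
  subalg_decomposition G br alpha hp hm ->
  exists P : {linear V -> V}, product_structure G br alpha P.
Proof.
move=> two_neq0 n_gt0 GS br_ml.
move=> [[[sp _ ap bp] [sm _ am bm]] [[vp [vp_in vp0]] [vm [vm_in vm0]]]].
move=> hpm0 hpm_span hgdec.
have RD := @reflectionD _ _ _ _ sp sm hpm0 hpm_span.
pose R := reflection_linear sp sm hpm0 hpm_span.
have RK : involutive R := reflection_involutive sp sm hpm0 hpm_span.
have RP := @reflection_pos _ _ _ _ sp sm hpm0 hpm_span.
have RN := @reflection_neg _ _ _ _ sp sm hpm0 hpm_span.
exists R; split; first split.
- move=> g x /hgdec [u [w [up ug wm wg ->]]].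
  by rewrite /= RD //; apply: (subspaceB (GS.1 g)).
- by exists vm; rewrite /= RN // eq_sym eq_oppr_self.
- by exists vp; rewrite /= RP // eq_oppr_self.
- exact: RK.
split.
- move=> v; have [u [w [up wm ->]]] := hpm_span v.
  by rewrite linearD /= !RD ?ap ?am // linearB.
- move=> x; apply/eqP; rewrite -subr_eq0 -nbr_top //.
  have := nbr_torsion_identity (N := R) br_ml x RK => /=.
  set Y := br _; set Z := br _.
  have Yp : Y \in hp by apply: bp => k; exact: reflection_addr_pos.
  have Zm : Z \in hm by apply: bm => k; exact: reflection_subr_neg.
  rewrite /= (RP Y Yp) (RN Z Zm) subrr addrN scaler0 addr0 => /eqP.
  by rewrite scaler_eq0 (negbTE two_neq0).
Qed.

Unset Implicit Arguments.
Set Strict Implicit.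

Theorem theorem6p8 (K : fieldType) (charK0 : [pchar K] =i pred0)
    (V : lmodType K) (Gam : zmodType) (G : Gam -> pred V) (n : nat) (hn : (2 <= n)%N)
    (br : ('I_n -> V) -> V) (eps : Gam -> Gam -> K) (alpha : {linear V -> V})
    (halg : nHomLieColor G br eps alpha) :
  ((exists P : {linear V -> V}, product_structure G br alpha P) <->
   (exists hp hm : pred V, subalg_decomposition G br alpha hp hm)) /\
  (forall P : {linear V -> V}, product_structure G br alpha P ->
     subalg_decomposition G br alpha (eigen_pos P) (eigen_neg P)).
Proof.
case: halg => [[GS _] br_ml _ _ _].
have two_neq0 : 2 != 0 :> K by rewrite (pcharf0P K).1.
have n_gt0 : (0 < n)%N by apply: leq_trans hn.
have eigen_dec := product_structure_subalg_decomposition two_neq0 n_gt0 GS br_ml.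
split; last exact: eigen_dec.
split=> [[P /eigen_dec PD] | [hp [hm]]].
  by exists (eigen_pos P), (eigen_neg P).
exact: subalg_decomposition_product_structure.
Qed.
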